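(* Let $1\le k\le n-1$ and let $\mu$ be a non-negative finite Borel measure on $G(n,n-k)$ such that $R_{n-k}^*(\mu)\ge1$ and $R_k^*(\mu^\perp)\ge1$. Then $Z=\mathrm{supp}(\mu)$ satisfies $\bigcup_{E\in Z}E\cap S^{n-1}=S^{n-1}$ and $\bigcup_{E\in Z}E^\perp\cap S^{n-1}=S^{n-1}$.
   Context: $G(n,m)$ is the Grassmannian of $m$-dimensional subspaces of $\mathbb{R}^n$. For $E\in G(n,m)$, $R_mf(E)=\int_{S^{n-1}\cap E}f\,d\sigma_E$ ($\sigma_E$ Haar probability on $S^{n-1}\cap E$), and $R_m^*:\mathcal{M}(G(n,m))\to\mathcal{M}(S^{n-1})$ is the dual on signed Borel measures, $\int f\,dR_m^*(\mu)=\int R_mf\,d\mu$. $\mu^\perp\in\mathcal{M}(G(n,k))$ is $\mu^\perp(A)=\mu(\{E^\perp:E\in A\})$. $\nu\ge1$ means $\nu-\sigma$ is a non-negative measure, $\sigma$ the Haar probability measure on $S^{n-1}$. $\mathrm{supp}(\mu)$ is the smallest closed set $Z$ with $\mu(A\setminus Z)=0$ for all Borel $A$. *)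

From HB Require Import structures.
From mathcomp Require Import all_boot all_order all_algebra.
From mathcomp Require Import all_classical all_reals all_analysis.
Set Implicit Arguments. Unset Strict Implicit. Unset Printing Implicit Defensive.
Import Order.TTheory GRing.Theory Num.Theory.
Import numFieldNormedType.Exports.
Local Open Scope classical_set_scope.
Local Open Scope ring_scope.

(* Conventions: points of R^n are row vectors 'rV[R]_n; a subspace E of R^n is
   encoded by its orthogonal projection matrix P (E = {x | x *m P = x}). The
   Grassmannian G(n,m) is the set of such projections of rank m, with the
   topology inherited from the space of matrices. Measures live on the Borel
   sigma-algebras of 'rV[R]_n and 'M[R]_n and are concentrated on the sphere,
   resp. on the Grassmannian. *)

Section Defs.
Variable R : realType.

Definition BV (n : nat) := g_sigma_algebraType (@open ('rV[R]_n)).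
Definition BM (n : nat) := g_sigma_algebraType (@open ('M[R]_n)).

Definition sphere (n : nat) : set 'rV[R]_n :=
  [set x | \sum_(i < n) x ord0 i ^+ 2 = 1].

Definition is_orth_proj (n : nat) (P : 'M[R]_n) : Prop :=
  P^T = P /\ P *m P = P.

Definition range_of (n : nat) (P : 'M[R]_n) : set 'rV[R]_n :=
  [set x | x *m P = x].

Definition Grass (n m : nat) : set 'M[R]_n :=
  [set P | is_orth_proj P /\ \rank P = m].

Definition orthogonal_mx (n : nat) (U : 'M[R]_n) : Prop := U *m U^T = 1%:M.

(* sig P is the Haar (O(E)-invariant) probability measure on S^{n-1} \cap E,
   for every nonzero subspace E = range P (so sig 1 is the Haar measure on S^{n-1}). *)
Definition haar_family (n : nat)
    (sig : 'M[R]_n -> {measure set (BV n) -> \bar R}) : Prop :=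
  forall P : 'M[R]_n, is_orth_proj P -> P != 0 ->
    [/\ sig P (~` (@sphere n `&` range_of P)) = 0%E,
        sig P setT = 1%E &
        forall U : 'M[R]_n, orthogonal_mx U -> U *m P = P *m U ->
          forall A : set (BV n), measurable A ->
            sig P ((fun x : 'rV[R]_n => x *m U) @^-1` A) = sig P A].

Definition radon (n : nat) (sig : 'M[R]_n -> {measure set (BV n) -> \bar R})
    (f : 'rV[R]_n -> R) (P : 'M[R]_n) : \bar R :=
  (\int[sig P]_(x in (@sphere n : set (BV n))) (f x)%:E)%E.

(* R^*(mu) >= 1 : the measure R^*(mu) on S^{n-1}, defined by duality
   \int f dR^*(mu) = \int R f dmu for f in C(S^{n-1}), dominates sigma. *)
Definition Rstar_ge1 (n : nat) (sig : 'M[R]_n -> {measure set (BV n) -> \bar R})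
    (mu : {measure set (BM n) -> \bar R}) : Prop :=
  exists nu : {measure set (BV n) -> \bar R},
    [/\ nu (~` @sphere n) = 0%E,
        (forall f : 'rV[R]_n -> R, {within @sphere n, continuous f} ->
           (\int[nu]_(x in (@sphere n : set (BV n))) (f x)%:E)%E =
           (\int[mu]_(P in [set: BM n]) radon sig f P)%E) &
        forall A : set (BV n), measurable A -> (sig 1%:M A <= nu A)%E].

(* mu^perp (A) = mu ({E^perp : E in A}); E^perp is encoded by 1 - P *)
Definition is_perp_measure (n : nat) (mu mup : {measure set (BM n) -> \bar R}) : Prop :=
  forall A : set (BM n), measurable A ->
    mup A = mu [set (1%:M - P : 'M[R]_n) | P in A].

Definition supp (n : nat) (mu : {measure set (BM n) -> \bar R}) : set 'M[R]_n :=
  \bigcap_(Z in [set Z : set 'M[R]_n | closed Z /\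
      forall A : set (BM n), measurable A -> mu (A `\` Z) = 0%E]) Z.

End Defs.
Arguments sphere {R} n.

From HB Require Import structures.
From mathcomp Require Import all_boot all_order all_algebra.
From mathcomp Require Import all_classical all_reals all_analysis.
From mathcomp Require Import ring lra.
From mathcomp Require Import zify.
Set Implicit Arguments. Unset Strict Implicit. Unset Printing Implicit Defensive.
Import Order.TTheory GRing.Theory Num.Theory.
Import numFieldNormedType.Exports.
Local Open Scope classical_set_scope.
Local Open Scope ring_scope.

(* Suppose the unit vector x lies in no subspace E of Z = supp mu.  The squared
   distance from x to E is continuous in E and positive on Z; covering the compact
   Grassmannian by finitely many neighbourhoods, each either mu-null or one on which
   the distance is bounded below, it is at least some e > 0 for mu-almost every E.
   A continuous bump f around x supported in the e-ball then has R f(E) = 0 for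
   mu-almost every E, so the integral of f against R^*(mu) vanishes, whereas
   R^*(mu) >= sigma bounds it below by the Haar measure of a cap around x, which is
   positive: the orthogonal group moves any cap onto any other of the same radius,
   and finitely many of them cover the sphere.  The statement for orthogonal
   complements is the same argument for mu^perp, whose support is Z^perp. *)

Section Euclid.
Variables (R : realType) (n : nat).
Implicit Types (u v w x y z : 'rV[R]_n) (P U : 'M[R]_n).

Definition sqnorm v : R := \sum_(i < n) v ord0 i ^+ 2.
Definition dot u v : R := (u *m v^T) ord0 ord0.

Lemma sphereE x : sphere n x = (sqnorm x = 1). Proof. by []. Qed.

Lemma sqnormE v : sqnorm v = dot v v.
Proof. by rewrite /dot mxE; apply: eq_bigr => i _; rewrite mxE expr2. Qed.

Lemma sqnorm_ge0 v : 0 <= sqnorm v.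
Proof. by apply: sumr_ge0 => i _; exact: sqr_ge0. Qed.

Lemma sqnorm_eq0 v : (sqnorm v == 0) = (v == 0).
Proof.
rewrite psumr_eq0; last by move=> i _; exact: sqr_ge0.
apply/allP/eqP => [v0|-> i _].
  apply/rowP => i; rewrite mxE; apply/eqP; rewrite -sqrf_eq0.
  exact: v0 i (mem_index_enum i).
by rewrite mxE sqrf_eq0 eqxx.
Qed.

Lemma sqnorm_gt0 v : (0 < sqnorm v) = (v != 0).
Proof. by rewrite lt_def sqnorm_eq0 sqnorm_ge0 andbT. Qed.

Lemma sqnorm0 : sqnorm 0 = 0.
Proof. by apply/eqP; rewrite sqnorm_eq0. Qed.

Lemma dotC u v : dot u v = dot v u.
Proof. by rewrite /dot -[u *m v^T]trmxK trmx_mul trmxK mxE. Qed.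

Lemma dotDl u v w : dot (u + v) w = dot u w + dot v w.
Proof. by rewrite /dot mulmxDl mxE. Qed.

Lemma dotNl u w : dot (- u) w = - dot u w.
Proof. by rewrite /dot mulNmx mxE. Qed.

Lemma dotDr u v w : dot w (u + v) = dot w u + dot w v.
Proof. by rewrite dotC dotDl !(dotC w). Qed.

Lemma dotNr u w : dot w (- u) = - dot w u.
Proof. by rewrite dotC dotNl dotC. Qed.

Lemma sqnormD u v : sqnorm (u + v) = sqnorm u + 2 * dot u v + sqnorm v.
Proof. by rewrite !sqnormE dotDl !dotDr (dotC v u); ring. Qed.

Lemma sqnormN v : sqnorm (- v) = sqnorm v.
Proof. by rewrite !sqnormE dotNl dotNr opprK. Qed.

Lemma sqnormB u v : sqnorm (u - v) = sqnorm u - 2 * dot u v + sqnorm v.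
Proof. by rewrite sqnormD dotNr sqnormN mulrN. Qed.

Lemma sqnorm_orthogonal_mx U v : orthogonal_mx U -> sqnorm (v *m U) = sqnorm v.
Proof. by move=> UUT; rewrite !sqnormE /dot trmx_mul mulmxA -(mulmxA v) UUT mulmx1. Qed.

(* Householder reflection in the hyperplane orthogonal to [x - z]. *)
Lemma orthogonal_mx_sphere_transitive x z : sphere n x -> sphere n z ->
  exists2 U, orthogonal_mx U & x *m U = z.
Proof.
move=> x1 z1; have [<-|xz] := eqVneq x z.
  by exists 1%:M; rewrite /orthogonal_mx ?trmx1 mulmx1.
pose v := x - z; pose c := sqnorm v.
have c0 : c != 0 by rewrite sqnorm_eq0 subr_eq0.
pose W := v^T *m v.
have WW : W *m W = c *: W.
  by rewrite /W mulmxA -(mulmxA v^T) [v *m v^T]mx11_scalar mul_mx_scalar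
    -scalemxAl -/(dot v v) -sqnormE.
have WT : W^T = W by rewrite /W trmx_mul trmxK.
pose a := 2 / c.
exists (1%:M - a *: W).
  have aWT : (a *: W)^T = a *: W by rewrite linearZ /= WT.
  rewrite /orthogonal_mx linearB /= trmx1 aWT mulmxBl mul1mx mulmxBr mulmx1.
  rewrite -scalemxAl -scalemxAr WW !scalerA.
  have -> : a * a * c = a + a by rewrite /a; field.
  by rewrite scalerDl opprB addrK subrK.
have xv : dot x v = c / 2.
  rewrite /c /v dotDr dotNr -sqnormE sqnormB.
  by rewrite (x1 : sqnorm x = 1) (z1 : sqnorm z = 1); field.
have ac : a * (c / 2) = 1 by rewrite /a; field.
rewrite mulmxBr mulmx1 -scalemxAr /W mulmxA [x *m v^T]mx11_scalar mul_scalar_mx.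
rewrite scalerA -/(dot x v) xv ac scale1r.
by rewrite /v opprB addrC subrK.
Qed.

Lemma dot_orth_proj P u w : is_orth_proj P -> dot (u *m P) (w *m P - w) = 0.
Proof.
move=> [PT PP]; rewrite /dot (_ : w *m P - w = w *m (P - 1%:M)); last first.
  by rewrite mulmxBr mulmx1.
rewrite trmx_mul -!mulmxA (mulmxA P) linearB /= trmx1 PT mulmxBr PP mulmx1.
by rewrite subrr mul0mx mulmx0 mxE.
Qed.

(* Pythagoras: [y - x] splits orthogonally into [(y - x) *m P] and [x *m P - x]. *)
Lemma orth_proj_closest P x y : is_orth_proj P -> range_of P y ->
  sqnorm (x - x *m P) <= sqnorm (y - x).
Proof.
move=> hP Py; have -> : y - x = (y - x) *m P + (x *m P - x).
  by rewrite mulmxBl Py addrA subrK.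
by rewrite [leRHS]sqnormD dot_orth_proj // mulr0 addr0 -sqnormN opprB lerDr sqnorm_ge0.
Qed.

End Euclid.

Section Continuity.
Variables (R : realType) (T : topologicalType).

Lemma continuous_sumr (I : Type) (r : seq I) (F : I -> T -> R) :
  (forall i, continuous (F i)) -> continuous (fun t => \sum_(i <- r) F i t).
Proof.
by move=> Fc; apply: continuous_big => [|i _]; [exact: add_continuous | exact: Fc].
Qed.

Lemma continuous_mx_entries m p (f : T -> 'M[R]_(m, p)) :
  (forall i j, continuous (fun t => f t i j)) -> continuous f.
Proof.
move=> fc t; apply/cvg_ballP => e e0.
have : \forall s \near t, forall i j, ball (f t i j) e (f s i j).
  apply: filter_forall => i; apply: filter_forall => j.
  by have /cvg_ballP := fc i j t; apply.
by apply: filterS => s fs; split.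
Qed.

Lemma continuous_entry m p (f : T -> 'M[R]_(m, p)) i j :
  continuous f -> continuous (fun t => f t i j).
Proof.
by move=> fc t; exact: (continuous_comp (fc t) (@coord_continuous _ _ _ i j _)).
Qed.

Lemma continuous_mulmx m p q (A : T -> 'M[R]_(m, p)) (B : T -> 'M[R]_(p, q)) :
  continuous A -> continuous B -> continuous (fun t => A t *m B t).
Proof.
move=> Ac Bc; apply: continuous_mx_entries => i j.
under eq_fun do rewrite mxE.
apply: continuous_sumr => k t.
by apply: continuousM; apply: continuous_entry.
Qed.

End Continuity.

Lemma closed_eqfun (R : realType) (T : topologicalType) (V : normedModType R)
    (f g : T -> V) :
  continuous f -> continuous g -> closed [set t | f t = g t].
Proof.
move=> fc gc; have -> : [set t | f t = g t] = (fun t => f t - g t) @^-1` [set 0].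
  by apply/seteqP; split => t /= => [->|/eqP]; rewrite ?subrr // subr_eq0 => /eqP.
apply: preimage_closed.
  by move=> t _; apply: continuousB; [exact: fc | exact: gc].
exact/accessible_closed_set1/hausdorff_accessible/norm_hausdorff.
Qed.

Section HeineBorel.
Variables (R : realType) (m p : nat).

Lemma vec_mx_continuous : continuous (@vec_mx R m p).
Proof.
apply: continuous_mx_entries => i j; under eq_fun do rewrite mxE.
exact: coord_continuous.
Qed.

Lemma mx_box_compact (b : R) :
  compact [set M : 'M[R]_(m, p) | forall i j, `|M i j| <= b].
Proof.
have -> : [set M : 'M[R]_(m, p) | forall i j, `|M i j| <= b] =
    [set vec_mx v | v in [set v : 'rV[R]_(m * p) | forall k, v ord0 k \in `[- b, b]]].
  apply/seteqP; split => [M Mb | _ [v vb <-] i j].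
    exists (mxvec M); last exact: mxvecK.
    by move=> k; case/mxvec_indexP: k => i j; rewrite mxvecE in_itv /= -ler_norml Mb.
  by rewrite mxE ler_norml; have := vb (mxvec_index i j); rewrite in_itv.
apply: (@continuous_compact _ _ (@vec_mx R m p)).
  by apply: continuous_subspaceT => v; exact: vec_mx_continuous.
by apply: (@rV_compact _ _ (fun=> `[- b, b]%classic)) => _; exact: segment_compact.
Qed.

Lemma mx_bounded_closed_compact (A : set 'M[R]_(m, p)) (b : R) :
  closed A -> (forall M i j, A M -> `|M i j| <= b) -> compact A.
Proof.
move=> Acl Ab.
exact: subclosed_compact Acl (@mx_box_compact b) (fun M AM i j => Ab M i j AM).
Qed.

End HeineBorel.

Section Borel.
Variables (T U : ptopologicalType).
Local Notation borel T := (g_sigma_algebraType (@open T)).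

Lemma open_borel (A : set T) : open A -> measurable (A : set (borel T)).
Proof. exact: sub_sigma_algebra. Qed.

Lemma closed_borel (A : set T) : closed A -> measurable (A : set (borel T)).
Proof.
move=> Acl; rewrite -[A]setCK; apply: measurableC.
by apply: open_borel; exact: closed_openC.
Qed.

Lemma continuous_borel_measurable (f : T -> U) :
  continuous f -> measurable_fun [set: borel T] (f : borel T -> borel U).
Proof.
move=> fc; apply: (@measurability _ _ (borel T) (borel U) _ _ (@open U)) => //.
move=> _ [B oB <-].
by rewrite setTI; apply: open_borel; apply: open_comp => // t _; exact: fc.
Qed.

End Borel.

Section EuclidTopology.
Variables (R : realType) (n : nat).

Lemma sqnorm_continuous : continuous (@sqnorm R n).
Proof.
apply: continuous_sumr => i; under eq_fun do rewrite expr2.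
by move=> v; apply: continuousM; exact: coord_continuous.
Qed.

Lemma sphere_closed : closed (sphere n : set 'rV[R]_n).
Proof.
have -> : sphere n = @sqnorm R n @^-1` [set 1] by [].
by apply: preimage_closed; [move=> v _; exact: sqnorm_continuous | exact: closed_eq].
Qed.

Lemma sphere_compact : compact (sphere n : set 'rV[R]_n).
Proof.
apply: (mx_bounded_closed_compact (b := 1) sphere_closed) => v i j v1.
rewrite (ord1 i) -(expr_le1 (n := 2)) ?normr_ge0 // real_normK ?num_real //.
rewrite -(v1 : sqnorm v = 1) /sqnorm (bigD1 j) //= lerDl.
by apply: sumr_ge0 => k _; exact: sqr_ge0.
Qed.

Lemma range_closed (P : 'M[R]_n) : closed (range_of P).
Proof.
apply: closed_eqfun; last by move=> ?; exact: cvg_id.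
apply: continuous_mulmx; [move=> ?; exact: cvg_id | exact: cst_continuous].
Qed.

Lemma sqdist_continuous (z : 'rV[R]_n) :
  continuous (fun y : 'rV[R]_n => sqnorm (y - z)).
Proof.
move=> y; apply: (@continuous_comp _ _ _ (fun y : 'rV[R]_n => y - z) (@sqnorm R n)).
  by apply: continuousB; [exact: cvg_id | exact: cst_continuous].
exact: sqnorm_continuous.
Qed.

Lemma sqdist_lt_open (z : 'rV[R]_n) r : open [set y | sqnorm (y - z) < r].
Proof.
rewrite (_ : [set y | _] = (fun y => sqnorm (y - z)) @^-1` [set t | t < r]) //.
by apply: open_comp; [move=> y _; exact: sqdist_continuous | exact: open_lt].
Qed.

Definition cap (z : 'rV[R]_n) (r : R) : set 'rV[R]_n :=
  sphere n `&` [set y | sqnorm (y - z) < r].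

Lemma cap_measurable z r : measurable (cap z r : set (BV R n)).
Proof.
apply: measurableI; first by apply: closed_borel; exact: sphere_closed.
by apply: open_borel; exact: sqdist_lt_open.
Qed.

End EuclidTopology.

Lemma mxrank_idempotent_tr (F : fieldType) n (P : 'M[F]_n) :
  P *m P = P -> (\rank P)%:R = \tr P.
Proof.
move=> PP; move: (col_base P) (row_base P) (mulmx_base P) (row_base_free P)
  (col_base_full P) => L B LB Bfree Lfull.
suff BL : B *m L = 1%:M by rewrite -{2}LB mxtrace_mulC BL mxtrace1.
apply: (row_free_inj Bfree); apply: (row_full_inj Lfull).
by rewrite mul1mx !mulmxA LB -mulmxA LB PP.
Qed.

Section Grassmannian.
Variables (R : realType) (n : nat).
Implicit Types P : 'M[R]_n.

Lemma orth_proj_entry_le1 P i j : is_orth_proj P -> `|P i j| <= 1.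
Proof.
move=> [PT PP].
have Pii k : P k k = \sum_l P k l ^+ 2.
  by rewrite -{1}PP mxE; apply: eq_bigr => l _; rewrite -{2}PT mxE expr2.
have sq_le_diag k l : P k l ^+ 2 <= P k k.
  by rewrite Pii (bigD1 l) //= lerDl; apply: sumr_ge0 => ? _; exact: sqr_ge0.
have Pii_le1 : P i i <= 1 by have := sq_le_diag i i; nra.
rewrite -(expr_le1 (n := 2)) ?normr_ge0 // real_normK ?num_real //.
exact: le_trans (sq_le_diag i j) Pii_le1.
Qed.

Lemma trmx_continuous : continuous (@trmx R n n).
Proof.
apply: continuous_mx_entries => i j; under eq_fun do rewrite mxE.
exact: coord_continuous.
Qed.

Lemma mxtrace_continuous : continuous (@mxtrace R n).
Proof. by apply: continuous_sumr => i; exact: coord_continuous. Qed.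

Lemma GrassE (m : nat) : @Grass R n m =
  [set P | P^T = P] `&` [set P | P *m P = P] `&` [set P | \tr P = m%:R].
Proof.
apply/seteqP; split => [P [[PT PP] <-] | P [[/= PT PP] trP]].
  by split; [split | rewrite /= mxrank_idempotent_tr].
by split => //; apply/eqP; rewrite -(eqr_nat R) mxrank_idempotent_tr // trP.
Qed.

Lemma Grass_closed (m : nat) : closed (@Grass R n m : set 'M[R]_n).
Proof.
have idc : continuous (@id 'M[R]_n) by move=> ?; exact: cvg_id.
rewrite GrassE; apply: closedI; first apply: closedI.
- exact: closed_eqfun trmx_continuous idc.
- exact: closed_eqfun (continuous_mulmx idc idc) idc.
- by apply: closed_eqfun mxtrace_continuous _ => P; exact: cst_continuous.
Qed.

Lemma Grass_compact (m : nat) : compact (@Grass R n m : set 'M[R]_n).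
Proof.
apply: (mx_bounded_closed_compact (b := 1) (@Grass_closed m)) => P i j [hP _].
exact: orth_proj_entry_le1.
Qed.

Lemma Grass_neq0 (m : nat) P :
  (0 < m)%N -> Grass m P -> P != 0.
Proof. by move=> m0 [_ rkP]; apply: contraTneq m0 => P0; rewrite -rkP P0 mxrank0. Qed.

Lemma Grass_compl (m : nat) P :
  Grass m P -> Grass (n - m) (1%:M - P).
Proof.
move=> GP; have le_mn : (m <= n)%N by case: GP => _ <-; exact: rank_leq_row.
move: GP; rewrite !GrassE => -[[/= PT PP] trP]; split; first split => /=.
- by rewrite linearB /= trmx1 PT.
- by rewrite mulmxBl mul1mx mulmxBr mulmx1 PP subrr subr0.
- by rewrite /= linearB /= mxtrace1 trP natrB.
Qed.

End Grassmannian.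

Section NonmeasurableIntegral.
Local Open Scope ereal_scope.
Context d (T : measurableType d) (R : realType) (mu : {measure set T -> \bar R}).
Import HBNNSimple.

(* [g] need not be measurable (it will be a Radon transform), so we compare it
   with the simple functions below it. *)
Lemma ge0_integral_ae_eq0 (D : set T) (g : T -> \bar R) :
  (forall x, D x -> 0 <= g x) -> {ae mu, forall x, D x -> g x = 0} ->
  \int[mu]_(x in D) g x = 0.
Proof.
move=> g0 [N [mN muN gN]]; apply/eqP; rewrite eq_le integral_ge0 // andbT.
rewrite ge0_integralE //; apply: ge_ereal_sup => _ [h hg <-].
rewrite -integralT_nnsfun (@ge0_negligible_integral _ _ _ mu setT N) //; last 2 first.
- by apply/measurable_realfun.measurable_EFinP; exact: measurable_funPT.
- by move=> x _; rewrite lee_fin fun_ge0.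
rewrite integral0_eq // => x [_ Nx]; apply/eqP.
rewrite eq_le [(0 <= _)%E]lee_fin fun_ge0 andbT.
have := hg x; rewrite patchE; case: ifPn => // /set_mem Dx.
by rewrite (contrapT (fun ngx => Nx (gN x ngx)) Dx).
Qed.

Lemma measure_le_integral (A D : set T) (f : T -> R) :
  measurable A -> A `<=` D ->
  (forall x, D x -> (0 <= f x)%R) -> (forall x, A x -> (1 <= f x)%R) ->
  mu A <= \int[mu]_(x in D) (f x)%:E.
Proof.
move=> mA AD f0 f1; rewrite ge0_integralE => [|x Dx]; last by rewrite lee_fin f0.
apply: ereal_sup_ubound; exists (indic_nnsfun R mA); last exact: sintegral_indic.
move=> x /=; rewrite /measurable_realfun.mindic indicE patchE.
have [Ax|nAx] := pselect (A x).
  by rewrite (mem_set Ax) (mem_set (AD x Ax)) lee_fin f1.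
by rewrite memNset //; case: ifPn => [/set_mem Dx|]; rewrite lee_fin ?f0.
Qed.

End NonmeasurableIntegral.

Section HaarCap.
Variables (R : realType) (n : nat) (sig : 'M[R]_n -> {measure set (BV R n) -> \bar R}).
Hypothesis haar_sig : haar_family sig.

Lemma sphere_dim_gt0 (x : 'rV[R]_n) : sphere n x -> (0 < n)%N.
Proof.
by case: n x => // x; rewrite /sphere /= big_ord0 => /esym/eqP; rewrite oner_eq0.
Qed.

Lemma orth_proj1 : is_orth_proj (1%:M : 'M[R]_n).
Proof. by split; [rewrite trmx1 | rewrite mulmx1]. Qed.

Lemma cap_orthogonal_preimage (U : 'M[R]_n) x z r :
  orthogonal_mx U -> x *m U = z -> (fun y => y *m U) @^-1` cap z r = cap x r.
Proof.
move=> UU <-; apply/funext => y; rewrite /preimage /cap /setI /=.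
by rewrite !sphereE -mulmxBl !sqnorm_orthogonal_mx.
Qed.

Lemma haar_cap_gt0 x r : sphere n x -> 0 < r -> (0 < sig 1%:M (cap x r))%E.
Proof.
move=> x1 r0; have n0 := sphere_dim_gt0 x1.
have one_neq0 : (1%:M : 'M[R]_n) != 0.
  by case: n n0 => // n' _; exact: oner_neq0.
have [sig_null sigT sig_inv] := haar_sig orth_proj1 one_neq0.
have cap_eq z : sphere n z -> sig 1%:M (cap z r) = sig 1%:M (cap x r).
  move=> z1; have [U UU xUz] := orthogonal_mx_sphere_transitive x1 z1.
  rewrite -(sig_inv U UU _ _ (cap_measurable z r)); last by rewrite mulmx1 mul1mx.
  by rewrite (cap_orthogonal_preimage r UU xUz).
rewrite lt_neqAle measure_ge0 andbT; apply/eqP => cap0.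
have [D Dsphere Dcover] : finite_subset_cover (sphere n)
    (fun z => [set y | sqnorm (y - z) < r]) (sphere n).
  have := @sphere_compact R n; rewrite compact_cover; apply=> [z _|z z1].
    exact: sqdist_lt_open.
  by exists z => //=; rewrite subrr sqnorm0.
have : (sig 1%:M).-negligible (~` (sphere n `&` range_of 1%:M) `|`
    \big[setU/set0]_(z <- finmap.enum_fset D) cap z r).
  apply: negligibleU.
    apply/negligibleP => //; apply: measurableC; apply: closed_borel.
    by apply: closedI; [exact: sphere_closed | exact: range_closed].
  rewrite big_seq; elim/big_ind: _ => [|A B|z zD]; first exact: negligible_set0.
    exact: negligibleU.
  apply/(negligibleP _ (cap_measurable z r)).
  exact: etrans (cap_eq z (set_mem (Dsphere z zD))) (esym cap0).
move=> /(negligibleS (B := [set: BV R n])) sig_setT.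
have /(negligibleP _ measurableT) : (sig 1%:M).-negligible [set: BV R n].
  apply: sig_setT => y _; have [y1|ny1] := pselect (sphere n y); last by left => -[].
  by right; have [z zD yz] := Dcover y y1; rewrite -bigcup_fset; exists z.
by move=> sig1T0; have := etrans (esym sigT) sig1T0 => -[] /eqP; rewrite oner_eq0.
Qed.

End HaarCap.

Section Support.
Variables (R : realType) (n : nat) (mu : {measure set (BM R n) -> \bar R}).
Implicit Types (P Q : 'M[R]_n) (phi : 'M[R]_n -> R).

Lemma notin_supp_nbhs_negligible P : ~ supp mu P ->
  exists2 O : set 'M[R]_n, open O /\ O P & mu.-negligible O.
Proof.
move=> /existsNP [Z /not_implyP [[Zcl Zfull] nZP]]; exists (~` Z).
  by split => //; exact: closed_openC.
have mZC : measurable (~` Z : set (BM R n)) by apply: open_borel; exact: closed_openC.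
by apply/(negligibleP _ mZC); rewrite -setTD; exact: Zfull.
Qed.

Lemma supp_local_lbound phi : continuous phi ->
  (forall P, supp mu P -> 0 < phi P) ->
  forall P, exists Oc : set 'M[R]_n * R,
    [/\ open Oc.1, Oc.1 P, 0 < Oc.2 & {ae mu, forall Q, Oc.1 Q -> Oc.2 <= phi Q}].
Proof.
move=> phic phi_pos P; have [PZ|nPZ] := pselect (supp mu P).
  exists ([set Q | phi P / 2 < phi Q], phi P / 2) => /=; split.
  - apply: (@open_comp _ _ phi [set t | phi P / 2 < t]) => [Q _|]; first exact: phic.
    exact: open_gt.
  - by rewrite ltr_pdivrMr // ltr_pMr ?ltr1n ?phi_pos.
  - by rewrite divr_gt0 ?phi_pos.
  - by apply: aeW => Q /ltW.
have [V [Vo VP] Vnull] := notin_supp_nbhs_negligible nPZ.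
exists (V, 1) => /=; split => //.
by apply: negligibleS Vnull => Q /= /not_implyP [].
Qed.

Lemma supp_ae_lbound (K : set 'M[R]_n) phi : compact K -> continuous phi ->
  (forall P, supp mu P -> 0 < phi P) ->
  exists2 e, 0 < e & {ae mu, forall Q, K Q -> e <= phi Q}.
Proof.
move=> Kc phic phi_pos.
(* Instance resolution does not find the a.e. filter here, so we supply it. *)
have ae_filter : Filter (almost_everywhere mu) by exact: ae_filter_ringOfSetsType.
have [Oc hOc] := choice (supp_local_lbound phic phi_pos).
have fin_lbound (s : seq 'M[R]_n) : exists2 e, 0 < e &
    {ae mu, forall Q, forall P, P \in s -> (Oc P).1 Q -> e <= phi Q}.
  elim: s => [|P s [e e0 ae_s]]; first by exists 1 => //; apply: aeW.
  have [_ _ c0 aeP] := hOc P.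
  exists (Num.min e (Oc P).2); first by rewrite lt_min e0 c0.
  move: ae_s aeP; apply: filterS2 => Q hs hP P'.
  rewrite in_cons => /predU1P [->|P's] OQ.
    by rewrite ge_min (hP OQ) orbT.
  by rewrite ge_min (hs P' P's OQ).
have [D DK Dcover] : finite_subset_cover K (fun P => (Oc P).1) K.
  move: Kc; rewrite compact_cover; apply => [P _|P KP]; first by case: (hOc P).
  by exists P => //; case: (hOc P).
have [e e0 ae_D] := fin_lbound (finmap.enum_fset D).
exists e => //; move: ae_D; apply: filterS => Q hD KQ.
by have [P PD OQ] := Dcover Q KQ; exact: hD P PD OQ.
Qed.

End Support.

Section Perp.
Variables (R : realType) (n : nat).
Local Notation compl := (fun P : 'M[R]_n => 1%:M - P).

Lemma compl_continuous : continuous compl.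
Proof.
move=> P; apply: (@continuousB _ _ _ (fun=> 1%:M) id); first exact: cst_continuous.
exact: cvg_id.
Qed.

Lemma image_compl (A : set (BM R n)) :
  [set (1%:M - P : 'M[R]_n) | P in A] = compl @^-1` A.
Proof.
apply/seteqP; split => [_ [P AP <-]|P AP]; first by rewrite /= subKr.
by exists (1%:M - P); rewrite ?subKr.
Qed.

Lemma compl_preimage_measurable (A : set (BM R n)) :
  measurable A -> measurable (compl @^-1` A : set (BM R n)).
Proof.
move=> mA; rewrite -[X in measurable X]setTI.
exact: continuous_borel_measurable compl_continuous _ _ mA.
Qed.

Variables (mu mup : {measure set (BM R n) -> \bar R}).
Hypothesis perp : is_perp_measure mu mup.

Lemma perp_ae (A : 'M[R]_n -> Prop) :
  {ae mu, forall P, A P} -> {ae mup, forall Q, A (1%:M - Q)}.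
Proof.
move=> [N [mN muN AN]]; exists (compl @^-1` N); split.
- exact: compl_preimage_measurable.
- rewrite perp ?image_compl; last exact: compl_preimage_measurable.
  by rewrite (_ : _ @^-1` _ = N) //; apply/seteqP; split => P; rewrite /= subKr.
- by move=> Q /= nAQ; exact: AN.
Qed.

Lemma supp_perp Q : supp mup Q -> supp mu (1%:M - Q).
Proof.
move=> Qsupp Z [Zcl Zfull]; apply: (Qsupp (compl @^-1` Z)); split.
  by apply: preimage_closed => // P _; exact: compl_continuous.
move=> A mA; rewrite perp ?image_compl; last first.
  apply: measurableD => //; apply: closed_borel.
  by apply: preimage_closed => // P _; exact: compl_continuous.
rewrite (_ : _ @^-1` _ = compl @^-1` A `\` Z).
  exact: Zfull (compl_preimage_measurable mA).
by apply/seteqP; split => P /=; rewrite subKr.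
Qed.

End Perp.

Section Bump.
Variables (R : realType) (n : nat) (x : 'rV[R]_n) (e : R).
Hypothesis e_gt0 : 0 < e.

Definition bump (y : 'rV[R]_n) : R := Num.max 0 (2 - 2 / e * sqnorm (y - x)).

Lemma bump_ge0 y : 0 <= bump y.
Proof. by rewrite le_max lexx. Qed.

Lemma bump_continuous : continuous bump.
Proof.
have -> : bump = (fun=> 0 : R^o) \max (fun y => 2 - 2 / e * sqnorm (y - x) : R^o).
  by [].
move=> y; apply: continuous_max; first exact: cst_continuous.
apply: continuousB; first exact: cst_continuous.
by apply: continuousM; [exact: cst_continuous | exact: sqdist_continuous].
Qed.

Lemma bump_eq0 y : e <= sqnorm (y - x) -> bump y = 0.
Proof.
move=> far; apply/max_idPl; rewrite subr_le0.
have : 2 / e * e <= 2 / e * sqnorm (y - x) by rewrite ler_pM2l ?divr_gt0.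
by rewrite divfK ?gt_eqF.
Qed.

Lemma bump_ge1 y : sqnorm (y - x) < e / 2 -> 1 <= bump y.
Proof.
move=> near; rewrite le_max; apply/orP; right.
have : 2 / e * sqnorm (y - x) < 2 / e * (e / 2) by rewrite ltr_pM2l ?divr_gt0.
rewrite (_ : 2 / e * (e / 2) = 1); last by field; rewrite gt_eqF.
by move=> ?; lra.
Qed.

End Bump.

Section RstarGe1.
Variables (R : realType) (n : nat) (sig : 'M[R]_n -> {measure set (BV R n) -> \bar R}).
Hypothesis haar_sig : haar_family sig.

Lemma radon_bump_eq0 (Q : 'M[R]_n) x e : is_orth_proj Q -> Q != 0 -> 0 < e ->
  e <= sqnorm (x - x *m Q) -> radon sig (bump x e) Q = 0%E.
Proof.
move=> Qproj Q0 e0 far; have [Q_null _ _] := haar_sig Qproj Q0.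
apply: ge0_integral_ae_eq0 => [y _|]; first by rewrite lee_fin bump_ge0.
exists (~` (sphere n `&` range_of Q)); split => //.
  apply: measurableC; apply: closed_borel.
  by apply: closedI; [exact: sphere_closed | exact: range_closed].
move=> y /not_implyP [y1 bump_neq0] [_ Qy]; apply: bump_neq0.
by rewrite bump_eq0 //; exact: le_trans far (orth_proj_closest x Qproj Qy).
Qed.

Lemma Rstar_ge1_not_ae_far (mu : {measure set (BM R n) -> \bar R}) x e :
  Rstar_ge1 sig mu -> sphere n x -> 0 < e ->
  ~ {ae mu, forall Q, [/\ is_orth_proj Q, Q != 0 & e <= sqnorm (x - x *m Q)]}.
Proof.
move=> [nu [_ nu_dual sig_le_nu]] x1 e0 far.
have ae_filter : Filter (almost_everywhere mu) by exact: ae_filter_ringOfSetsType.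
have : (\int[nu]_(y in (sphere n : set (BV R n))) (bump x e y)%:E = 0)%E.
  rewrite nu_dual; last exact/continuous_subspaceT/bump_continuous.
  apply: ge0_integral_ae_eq0 => [P _|].
    by apply: integral_ge0 => y _; rewrite lee_fin bump_ge0.
  by move: far; apply: filterS => Q [Qproj Q0 Qfar] _; exact: radon_bump_eq0.
apply/eqP; rewrite gt_eqF //; have e20 : 0 < e / 2 by rewrite divr_gt0.
apply: (lt_le_trans (haar_cap_gt0 haar_sig x1 e20)).
apply: le_trans (sig_le_nu _ (cap_measurable x (e / 2))) _.
apply: measure_le_integral => [||y _|y [_]]; first exact: cap_measurable.
- by move=> y [].
- exact: bump_ge0.
- exact: bump_ge1.
Qed.

Lemma Rstar_ge1_supp_cover (mu : {measure set (BM R n) -> \bar R}) m x :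
  (0 < m)%N -> {ae mu, forall P, Grass m P} ->
  Rstar_ge1 sig mu -> sphere n x -> exists P, supp mu P /\ range_of P x.
Proof.
move=> m0 aeG hR x1; apply: contrapT => uncovered.
have ae_filter : Filter (almost_everywhere mu) by exact: ae_filter_ringOfSetsType.
have dist_continuous : continuous (fun P : 'M[R]_n => sqnorm (x - x *m P)).
  move=> P; apply: (@continuous_comp _ _ _ (fun P => x - x *m P) (@sqnorm R n)).
    apply: continuousB; first exact: cst_continuous.
    by apply: continuous_mulmx; [exact: cst_continuous | move=> ?; exact: cvg_id].
  exact: sqnorm_continuous.
have dist_gt0 P : supp mu P -> 0 < sqnorm (x - x *m P).
  move=> Psupp; rewrite sqnorm_gt0 subr_eq0 eq_sym; apply/eqP => xP.
  by apply: uncovered; exists P.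
have [e e0 far] := supp_ae_lbound (@Grass_compact R n m) dist_continuous dist_gt0.
apply: (Rstar_ge1_not_ae_far hR x1 e0).
move: aeG far; apply: filterS2 => Q GQ farQ.
by split; [case: GQ | exact: Grass_neq0 GQ | exact: farQ].
Qed.

End RstarGe1.

Theorem mainTheorem17 (R : realType) (n k : nat)
  (sig : 'M[R]_n -> {measure set (BV R n) -> \bar R})
  (mu : {finite_measure set (BM R n) -> \bar R}) :
  haar_family sig ->
  (1 <= k)%N -> (k <= n.-1)%N ->
  mu (~` @Grass R n (n - k)) = 0%E ->
  Rstar_ge1 sig mu ->
  (exists mup : {measure set (BM R n) -> \bar R},
      is_perp_measure mu mup /\ Rstar_ge1 sig mup) ->
  forall x : 'rV[R]_n, sphere n x ->
    (exists P, supp mu P /\ range_of P x) /\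
    (exists P, supp mu P /\ range_of (1%:M - P) x).
Proof.
move=> haar_sig k_ge1 k_le hG hR [mup [perp hRp]] x x1.
have k_lt : (k < n)%N by lia.
have aeG : {ae mu, forall P, Grass (n - k) P}.
  exists (~` Grass (n - k)); split => //.
  by apply: measurableC; apply: closed_borel; exact: Grass_closed.
have nk_gt0 : (0 < n - k)%N by rewrite subn_gt0.
split; first by have [P ?] := Rstar_ge1_supp_cover haar_sig nk_gt0 aeG hR x1; exists P.
have ae_filter : Filter (almost_everywhere mup) by exact: ae_filter_ringOfSetsType.
have aeGp : {ae mup, forall Q, Grass k Q}.
  move: (perp_ae perp aeG); apply: filterS => Q /Grass_compl.
  by rewrite subKr subKn 1?ltnW.
have [Q [Qsupp Qx]] := Rstar_ge1_supp_cover haar_sig k_ge1 aeGp hRp x1.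
by exists (1%:M - Q); rewrite subKr; split => //; exact (supp_perp perp Qsupp).
Qed.
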